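(* Let $a=a_0+a_1e_1+a_2e_2+a_3e_3\in C\ell_2$ with $a\neq 0$ and $H_a=0$, let $A=\varphi(a)$ and $$M=\varphi\Big(\frac{a'}{4(a_0^2+a_3^2)}\Big)=\frac{1}{4(a_0^2+a_3^2)}\begin{pmatrix} a_0+a_1 & a_2-a_3\\ a_2+a_3 & a_0-a_1\end{pmatrix}.$$ Then $AMA=A$, $MAM=M$, $(AM)^T=AM$ and $(MA)^T=MA$; that is, $M$ is the Moore–Penrose inverse of $\varphi(a)$.
   Context: $C\ell_2$ is the 4-dimensional real associative algebra with basis $1,e_1,e_2,e_3$ and multiplication $e_1^2=e_2^2=1$, $e_3^2=-1$, $e_1e_2=e_3=-e_2e_1$, $e_1e_3=e_2=-e_3e_1$, $e_3e_2=e_1=-e_2e_3$. For $a=a_0+a_1e_1+a_2e_2+a_3e_3$ ($a_i\in\mathbb{R}$): $a'=a_0+a_1e_1+a_2e_2-a_3e_3$, $H_a=a_0^2-a_1^2-a_2^2+a_3^2$, and $\varphi(a)=\begin{pmatrix} a_0+a_1 & a_2+a_3\\ a_2-a_3 & a_0-a_1\end{pmatrix}\in\mathbb{R}^{2\times 2}$. *)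

(* Cl_2 elements are represented by their four real
   coordinates (a0,a1,a2,a3) w.r.t. the basis 1,e1,e2,e3. *)
From mathcomp Require Import all_boot all_order all_algebra.
Set Implicit Arguments. Unset Strict Implicit. Unset Printing Implicit Defensive.
Import Order.TTheory GRing.Theory Num.Theory.
Local Open Scope ring_scope.

Record Cl2 (R : Type) := mkCl2 { c0 : R; c1 : R; c2 : R; c3 : R }.

Section Cl2ops.
Variable R : comRingType.

Definition cl2_zero : Cl2 R := mkCl2 0 0 0 0.

Definition cl2_scale (k : R) (a : Cl2 R) : Cl2 R :=
  mkCl2 (k * c0 a) (k * c1 a) (k * c2 a) (k * c3 a).

(* Clifford multiplication: e1^2=e2^2=1, e3^2=-1, e1e2=e3=-e2e1,
   e1e3=e2=-e3e1, e3e2=e1=-e2e3. *)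
Definition cl2_mul (a b : Cl2 R) : Cl2 R :=
  mkCl2 (c0 a * c0 b + c1 a * c1 b + c2 a * c2 b - c3 a * c3 b)
        (c0 a * c1 b + c1 a * c0 b - c2 a * c3 b + c3 a * c2 b)
        (c0 a * c2 b + c2 a * c0 b + c1 a * c3 b - c3 a * c1 b)
        (c0 a * c3 b + c3 a * c0 b + c1 a * c2 b - c2 a * c1 b).

Definition cl2_prime (a : Cl2 R) : Cl2 R := mkCl2 (c0 a) (c1 a) (c2 a) (- c3 a).

Definition cl2_H (a : Cl2 R) : R :=
  c0 a ^+ 2 - c1 a ^+ 2 - c2 a ^+ 2 + c3 a ^+ 2.

Definition cl2_phi (a : Cl2 R) : 'M[R]_2 :=
  \matrix_(i < 2, j < 2)
    if i == 0 :> nat then (if j == 0 :> nat then c0 a + c1 a else c2 a + c3 a)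
    else (if j == 0 :> nat then c2 a - c3 a else c0 a - c1 a).
End Cl2ops.

(** Since [H_a = det φ(a)], the matrix [A = φ(a)] is singular, and a singular
    2×2 matrix satisfies [A Aᵀ A = tr(Aᵀ A) A]; any such [A] has
    [Aᵀ / tr(Aᵀ A)] as its Moore–Penrose inverse.  Finally [φ(a') = Aᵀ] and
    [tr(Aᵀ A) = 2(a_0² + a_1² + a_2² + a_3²) = 4(a_0² + a_3²) - 2 H_a]. *)

From mathcomp Require Import all_boot all_order all_algebra ring lra.
Import Order.TTheory GRing.Theory Num.Theory.
Local Open Scope ring_scope.

Definition moore_penrose_inverse {R : pzRingType} {m n}
    (A : 'M[R]_(m, n)) (M : 'M[R]_(n, m)) : Prop :=
  [/\ A *m M *m A = A, M *m A *m M = M, (A *m M)^T = A *m M & (M *m A)^T = M *m A].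

Lemma trmx_moore_penrose_inverse (R : comPzRingType) m n (A : 'M[R]_(m, n)) (c k : R) :
  A *m A^T *m A = c *: A -> k * c = 1 -> moore_penrose_inverse A (k *: A^T).
Proof.
move=> AAtA kc1.
have AtAAt : A^T *m A *m A^T = c *: A^T.
  by move: (congr1 trmx AAtA); rewrite !trmx_mul trmxK mulmxA linearZ.
split.
- by rewrite -scalemxAr -scalemxAl AAtA scalerA kc1 scale1r.
- by rewrite -scalemxAr -!scalemxAl AtAAt !scalerA -mulrA kc1 mulr1.
- by rewrite -scalemxAr linearZ /= trmx_mul trmxK.
- by rewrite -scalemxAl linearZ /= trmx_mul trmxK.
Qed.

Lemma ord2P (i : 'I_2) : i = 0 \/ i = 1.
Proof. by case: i => [[|[|//]] ?]; [left | right]; apply/val_inj. Qed.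

Lemma det_mx22 (R : comPzRingType) (A : 'M[R]_2) :
  \det A = A 0 0 * A 1 1 - A 0 1 * A 1 0.
Proof.
rewrite (expand_det_row _ 0) !big_ord_recr big_ord0 /cofactor !det_mx11 !mxE /=.
rewrite add0r !expr0 !expr1 mul1r mulN1r mulrN.
by congr (A _ _ * A _ _ - A _ _ * A _ _); apply/val_inj.
Qed.

(* Polarized Cayley–Hamilton identity in dimension 2. *)
Lemma mulmx22_sandwich (R : comPzRingType) (A B : 'M[R]_2) :
  A *m B *m A = \tr (B *m A) *: A - \det A *: \adj B.
Proof.
have lift00 : lift 0 0 = 1 :> 'I_2 by apply: val_inj.
have lift10 : lift 1 0 = 0 :> 'I_2 by apply: val_inj.
rewrite det_mx22 /mxtrace; apply/matrixP => i j.
rewrite !mxE !big_ord_recl !big_ord0 /= !mxE ?big_ord_recl ?big_ord0 /= ?mxE.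
rewrite /cofactor det_mx11 ?mxE.
by case: (ord2P i) (ord2P j) => -> [] ->; rewrite ?lift00 ?lift10 /= ?expr0 ?expr1; ring.
Qed.

Lemma mulmx22_trmx_det0 (R : comPzRingType) (A : 'M[R]_2) :
  \det A = 0 -> A *m A^T *m A = \tr (A^T *m A) *: A.
Proof. by move=> detA0; rewrite mulmx22_sandwich detA0 scale0r subr0. Qed.

Section Cl2Matrix.
Variable R : comNzRingType.
Implicit Types (a : Cl2 R) (k : R).

Lemma cl2_phi_prime a : cl2_phi (cl2_prime a) = (cl2_phi a)^T.
Proof.
apply/matrixP => i j; rewrite !mxE.
by case: (ord2P i) (ord2P j) => -> [] -> /=; rewrite ?opprK.
Qed.

Lemma cl2_phi_scale k a : cl2_phi (cl2_scale k a) = k *: cl2_phi a.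
Proof.
apply/matrixP => i j; rewrite !mxE.
by case: (ord2P i) (ord2P j) => -> [] -> /=; rewrite mulrDr ?mulrN.
Qed.

Lemma det_cl2_phi a : \det (cl2_phi a) = cl2_H a.
Proof. by rewrite det_mx22 !mxE /= /cl2_H; ring. Qed.

Lemma mxtrace_cl2_phi_gram a :
  \tr ((cl2_phi a)^T *m cl2_phi a) = 4 * (c0 a ^+ 2 + c3 a ^+ 2) - 2 * cl2_H a.
Proof.
rewrite /mxtrace !big_ord_recl big_ord0 !mxE !big_ord_recl !big_ord0 !mxE /= /cl2_H.
ring.
Qed.

End Cl2Matrix.

Lemma cl2_H0_norm_neq0 (R : realFieldType) (a : Cl2 R) :
  a <> cl2_zero R -> cl2_H a = 0 -> c0 a ^+ 2 + c3 a ^+ 2 != 0.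
Proof.
case: a => a0 a1 a2 a3 a_neq0; rewrite /cl2_H /= => Ha0; apply/eqP => s0.
have a0_0 : a0 = 0 by nra.
have a3_0 : a3 = 0 by nra.
have a1_0 : a1 = 0 by nra.
have a2_0 : a2 = 0 by nra.
by apply: a_neq0; rewrite a0_0 a1_0 a2_0 a3_0.
Qed.

Theorem theorem3p4 (R : realFieldType) (a : Cl2 R) :
  a <> cl2_zero R -> cl2_H a = 0 ->
  let A := cl2_phi a in
  let M := cl2_phi (cl2_scale (4 * (c0 a ^+ 2 + c3 a ^+ 2))^-1 (cl2_prime a)) in
  [/\ A *m M *m A = A, M *m A *m M = M, (A *m M)^T = A *m M & (M *m A)^T = M *m A].
Proof.
move=> a_neq0 Ha0 A M.
have s_neq0 : 4 * (c0 a ^+ 2 + c3 a ^+ 2) != 0.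
  by rewrite mulf_neq0 ?pnatr_eq0 ?cl2_H0_norm_neq0.
have gram : A *m A^T *m A = (4 * (c0 a ^+ 2 + c3 a ^+ 2)) *: A.
  by rewrite mulmx22_trmx_det0 ?det_cl2_phi // mxtrace_cl2_phi_gram Ha0 mulr0 subr0.
rewrite /M cl2_phi_scale cl2_phi_prime.
exact: trmx_moore_penrose_inverse gram (mulVf s_neq0).
Qed.
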